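(* Let $\mu=\alpha_-\delta_{-\infty}+\alpha_0\mu_0+\alpha_+\delta_{+\infty}\in\mathcal{P}(\overline{\mathbb{Z}})$ with $\alpha_\sigma\ge0$ summing to $1$, $\mu_0\in\mathcal{P}(\mathbb{Z})$ and $\alpha_0\ne0$. Let $0<\varepsilon<\alpha_0/2$, $R\in\mathbb{N}$ with $R>\max\{R_{\overline{\mathbb{Z}}}(\varepsilon),R_{\mu_0}(\varepsilon)\}$, $n\in\mathbb{N}$ and $w\in\Omega^{(0)}_n(\mu,2^{-R}\varepsilon)$. Then $\ell^0(w)$ is well defined and $$\|\ell^0(w)-\mu_0\|<\frac{6\varepsilon}{\alpha_0}.$$
   Context: $\overline{\mathbb{Z}}=\mathbb{Z}\cup\{\pm\infty\}$ with metric $d(h,k)=|\varphi(h)-\varphi(k)|$, $\varphi(\pm\infty)=\pm1$, $\varphi(k)=1-2^{-k}$ ($k\ge0$), $\varphi(k)=-1+2^{-|k|}$ ($k<0$). For signed measures, $\|\nu\|=\sup\{\int f\,d\nu: f\text{ 1-Lipschitz for }d,\ \sup|f|\le1\}$; $B(\mu,\varepsilon)=\{\nu\in\mathcal{P}(\overline{\mathbb{Z}}):\|\nu-\mu\|<\varepsilon\}$. $\Omega^{(0)}_n$: words $w=(w_1,\dots,w_n)\in\mathbb{Z}^n$, $w_1=0$, $|w_i-w_{i+1}|=1$; $\ell(w)=\frac1n\sum_j\delta_{w_j}$; $\Omega^{(0)}_n(\mu,\varepsilon)=\{w\in\Omega^{(0)}_n:\ell(w)\in B(\mu,\varepsilon)\}$.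 With $A^0=\{-R+1,\dots,R-1\}$, $N^0(w)=\#\{j\le n:w_j\in A^0\}$ and, when $N^0(w)\neq0$, $\ell^0(w)=\frac1{N^0(w)}\sum_{j\le n:\,w_j\in A^0}\delta_{w_j}$. $R_{\overline{\mathbb{Z}}}(\varepsilon)=\lceil\log_2(1/\varepsilon)\rceil+1$ and $R_{\mu_0}(\varepsilon)=\min\{R\in\mathbb{N}:\mu_0(\{-R+1,\dots,R-1\})>1-\varepsilon\}$. *)

From Stdlib Require Import Reals ZArith List Lra Lia ClassicalEpsilon.
From Coquelicot Require Import Coquelicot.
Open Scope R_scope.

Inductive ZExt : Type := ZNinf | ZFin (z : Z) | ZPinf.

Definition phi (h : ZExt) : R :=
  match h with
  | ZNinf => -1
  | ZPinf => 1
  | ZFin k => if (0 <=? k)%Z then 1 - powerRZ 2 (- k) else -1 + powerRZ 2 k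
  end.

Definition dZ (h k : ZExt) : R := Rabs (phi h - phi k).

Definition admissible (f : ZExt -> R) : Prop :=
  (forall h k, Rabs (f h - f k) <= dZ h k) /\ (forall h, Rabs (f h) <= 1).

(* Signed measures on the countable (discrete) space Zbar are represented by
   their point-mass functions nu : ZExt -> R.  Integral of f against nu
   (Z enumerated as 0,-1,1,-2,2,... via k |-> k and -k-1). *)
Definition integ (f : ZExt -> R) (nu : ZExt -> R) : R :=
  nu ZNinf * f ZNinf + nu ZPinf * f ZPinf +
  Series (fun k : nat =>
            nu (ZFin (Z.of_nat k)) * f (ZFin (Z.of_nat k)) +
            nu (ZFin (- Z.of_nat k - 1)%Z) * f (ZFin (- Z.of_nat k - 1)%Z)).

Definition mnorm (nu : ZExt -> R) : Rbar :=
  Lub_Rbar (fun r => exists f, admissible f /\ r = integ f nu).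

Definition msub (nu1 nu2 : ZExt -> R) : ZExt -> R := fun x => nu1 x - nu2 x.

Definition in_ball (nu mu : ZExt -> R) (eps : R) : Prop :=
  Rbar_lt (mnorm (msub nu mu)) (Finite eps).

Definition is_prob_Z (mu0 : Z -> R) : Prop :=
  (forall z, 0 <= mu0 z) /\
  ex_series (fun k : nat => mu0 (Z.of_nat k) + mu0 (- Z.of_nat k - 1)%Z) /\
  Series (fun k : nat => mu0 (Z.of_nat k) + mu0 (- Z.of_nat k - 1)%Z) = 1.

Definition extZ (mu0 : Z -> R) : ZExt -> R :=
  fun x => match x with ZFin z => mu0 z | _ => 0 end.

Definition mix (am a0 ap : R) (mu0 : Z -> R) : ZExt -> R :=
  fun x => match x with ZNinf => am | ZPinf => ap | ZFin z => a0 * mu0 z end.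

Definition in_Omega0 (n : nat) (w : list Z) : Prop :=
  length w = n /\ (exists rest, w = 0%Z :: rest) /\
  (forall i : nat, (S i < length w)%nat ->
     Z.abs (nth i w 0%Z - nth (S i) w 0%Z) = 1%Z).

Definition count_Z (w : list Z) (z : Z) : nat := count_occ Z.eq_dec w z.

Definition ell (w : list Z) : ZExt -> R :=
  fun x => match x with
           | ZFin z => INR (count_Z w z) / INR (length w)
           | _ => 0
           end.

Definition inA0 (Rr : nat) (z : Z) : bool := (Z.abs z <? Z.of_nat Rr)%Z.

Definition Nzero_count (Rr : nat) (w : list Z) : nat := length (filter (inA0 Rr) w).

Definition ell0 (Rr : nat) (w : list Z) : ZExt -> R :=
  fun x => match x with
           | ZFin z => if inA0 Rr z then INR (count_Z w z) / INR (Nzero_count Rr w) else 0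
           | _ => 0
           end.

Definition Rceil (x : R) : Z := (- Int_part (- x))%Z.

Definition log2 (x : R) : R := ln x / ln 2.

Definition R_Zbar (eps : R) : Z := (Rceil (log2 (1 / eps)) + 1)%Z.

Definition mass_A (mu0 : Z -> R) (Rr : nat) : R :=
  fold_right Rplus 0
    (map (fun k : nat => mu0 (Z.of_nat k - Z.of_nat Rr + 1)%Z) (seq 0 (2 * Rr - 1))).

Definition is_R_mu0 (mu0 : Z -> R) (eps : R) (r : nat) : Prop :=
  mass_A mu0 r > 1 - eps /\ (forall r', mass_A mu0 r' > 1 - eps -> (r <= r')%nat).

Definition R_mu0 (mu0 : Z -> R) (eps : R) : nat :=
  epsilon (inhabits 0%nat) (is_R_mu0 mu0 eps).

From Stdlib Require Import Reals ZArith List.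
From Coquelicot Require Import Coquelicot.
From Stdlib Require Import Lra Lia Classical ClassicalEpsilon Wf_nat.
Open Scope R_scope.

(* Points of A^0 = {|z| < R} are at d-distance at least 2^-R from the complement of A^0.
   Hence for every admissible f and every constant u, the function 2^-(R+1) (f - u) 1_{A^0}
   is again admissible, and the ball hypothesis bounds its integral against l(w) - mu by
   2^-R eps.  On A^0, l(w) is the multiple N^0(w)/n of l^0(w), so the choice
   u = int f dl^0(w) kills the l(w) part and leaves a0 int_{A^0} (u - f) dmu0 < 2 eps.
   Since R > R_mu0(eps), mu0 puts mass less than eps outside A^0, whence
   int f d(l^0(w) - mu0) = int (u - f) dmu0 < 2 eps / a0 + 2 eps <= 4 eps / a0.
   The same test with the constant -2 on A^0 shows that N^0(w) = 0 would force
   a0 mu0(A^0) < eps, which is incompatible with mu0(A^0) > 1 - eps and eps < a0 / 2. *)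

Definition is_zsum (h : Z -> R) (s : R) : Prop :=
  is_series (fun k : nat => h (Z.of_nat k) + h (- Z.of_nat k - 1)%Z) s.

Definition zsum (h : Z -> R) : R :=
  Series (fun k : nat => h (Z.of_nat k) + h (- Z.of_nat k - 1)%Z).

Lemma zsum_unique h s : is_zsum h s -> zsum h = s.
Proof. apply is_series_unique. Qed.

Lemma is_zsum_ext h1 h2 s : (forall z, h1 z = h2 z) -> is_zsum h1 s -> is_zsum h2 s.
Proof. intros E. apply is_series_ext. intros k. now rewrite !E. Qed.

Lemma is_zsum_plus h1 h2 s1 s2 :
  is_zsum h1 s1 -> is_zsum h2 s2 -> is_zsum (fun z => h1 z + h2 z) (s1 + s2).
Proof.
  intros H1 H2. eapply is_series_ext; [| exact (is_series_plus _ _ _ _ H1 H2)].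
  intros k. cbn. ring.
Qed.

Lemma is_zsum_scal c h s : is_zsum h s -> is_zsum (fun z => c * h z) (c * s).
Proof.
  intros H. eapply is_series_ext; [| exact (is_series_scal_l c _ _ H)].
  intros k. cbn. ring.
Qed.

Lemma is_zsum_minus h1 h2 s1 s2 :
  is_zsum h1 s1 -> is_zsum h2 s2 -> is_zsum (fun z => h1 z - h2 z) (s1 - s2).
Proof.
  intros H1 H2. replace (s1 - s2) with (s1 + -1 * s2) by ring.
  eapply is_zsum_ext; [| exact (is_zsum_plus _ _ _ _ H1 (is_zsum_scal (-1) _ _ H2))].
  intros z. cbn. ring.
Qed.

Lemma is_series_zero : is_series (fun _ : nat => 0) 0.
Proof.
  eapply filterlim_ext; [| apply filterlim_const].
  intros n. rewrite sum_n_const. cbn. ring.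
Qed.

Lemma is_series_nonneg a l : (forall k, 0 <= a k) -> is_series a l -> 0 <= l.
Proof.
  intros Ha H. rewrite <- (is_series_unique _ _ H), <- (is_series_unique _ _ is_series_zero).
  apply Series_le; [intros k; split; [lra | apply Ha] | now exists l].
Qed.

Lemma is_zsum_le h1 h2 s1 s2 :
  (forall z, h1 z <= h2 z) -> is_zsum h1 s1 -> is_zsum h2 s2 -> s1 <= s2.
Proof.
  intros Hle H1 H2.
  cut (0 <= s2 - s1); [lra|].
  refine (is_series_nonneg _ _ _ (is_zsum_minus _ _ _ _ H2 H1)).
  intros k. pose proof (Hle (Z.of_nat k)). pose proof (Hle (- Z.of_nat k - 1)%Z). lra.
Qed.

Lemma is_series_decr_1_R (a : nat -> R) (l : R) :
  is_series (fun k => a (S k)) (l - a O) -> is_series a l.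
Proof. intros H. apply (is_series_decr_1 a l). exact H. Qed.

Lemma is_series_delta (m : nat) (c : R) :
  is_series (fun k => if Nat.eq_dec k m then c else 0) c.
Proof.
  revert c. induction m as [|m IH]; intros c; apply is_series_decr_1_R.
  - destruct (Nat.eq_dec 0 0) as [_|]; [|congruence].
    rewrite Rminus_diag. apply (is_series_ext (fun _ => 0)); [| exact is_series_zero].
    intros k. destruct (Nat.eq_dec (S k) 0); [lia | reflexivity].
  - destruct (Nat.eq_dec 0 (S m)) as [|_]; [lia|].
    rewrite Rminus_0_r. apply (is_series_ext (fun k => if Nat.eq_dec k m then c else 0)); [| apply IH].
    intros k. destruct (Nat.eq_dec k m), (Nat.eq_dec (S k) (S m)); try lia; reflexivity.
Qed.

Lemma is_zsum_delta a c : is_zsum (fun z => if Z.eq_dec a z then c else 0) c.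
Proof.
  destruct (Z_le_gt_dec 0 a) as [Ha | Ha].
  - eapply is_series_ext; [| exact (is_series_delta (Z.to_nat a) c)].
    intros k. cbn -[Z.of_nat Z.to_nat].
    destruct (Nat.eq_dec k (Z.to_nat a)), (Z.eq_dec a (Z.of_nat k)),
      (Z.eq_dec a (- Z.of_nat k - 1)); try lia; ring.
  - eapply is_series_ext; [| exact (is_series_delta (Z.to_nat (- a - 1)) c)].
    intros k. cbn -[Z.of_nat Z.to_nat].
    destruct (Nat.eq_dec k (Z.to_nat (- a - 1))), (Z.eq_dec a (Z.of_nat k)),
      (Z.eq_dec a (- Z.of_nat k - 1)); try lia; ring.
Qed.

Lemma is_zsum_count_occ (l : list Z) h :
  is_zsum (fun z => INR (count_occ Z.eq_dec l z) * h z) (fold_right Rplus 0 (map h l)).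
Proof.
  induction l as [|a l IH]; cbn [count_occ map fold_right].
  - eapply is_series_ext; [| exact is_series_zero]. intros k. cbn. ring.
  - eapply is_zsum_ext; [| exact (is_zsum_plus _ _ _ _ (is_zsum_delta a (h a)) IH)].
    intros z. cbn beta. destruct (Z.eq_dec a z) as [<- | ne]; [rewrite S_INR|]; ring.
Qed.

Lemma is_zsum_dominated h g s :
  (forall z, Rabs (h z) <= g z) -> is_zsum g s -> is_zsum h (zsum h).
Proof.
  intros Hle Hg. apply Series_correct.
  apply (@ex_series_le R_AbsRing R_CompleteNormedModule _
           (fun k => g (Z.of_nat k) + g (- Z.of_nat k - 1)%Z)).
  - intros k. eapply Rle_trans; [apply Rabs_triang|]. apply Rplus_le_compat; apply Hle.
  - now exists s.
Qed.

Lemma fold_right_Rplus_map_const (A : Type) (c : R) (l : list A) :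
  fold_right Rplus 0 (map (fun _ => c) l) = INR (length l) * c.
Proof. induction l as [|a l IH]; cbn [map fold_right length]; [cbn | rewrite S_INR, IH]; ring. Qed.

Lemma count_occ_filter (A : Type) (eq_dec : forall x y : A, {x = y} + {x <> y})
  (p : A -> bool) (l : list A) x :
  count_occ eq_dec (filter p l) x = if p x then count_occ eq_dec l x else 0%nat.
Proof.
  induction l as [|a l IH]; cbn; [now destruct (p x)|].
  destruct (eq_dec a x) as [<- | ne], (p a) eqn:Ha; cbn;
    rewrite ?IH, ?Ha; try destruct (eq_dec a a); try destruct (eq_dec a x); congruence.
Qed.

Definition A0_list (R : nat) : list Z :=
  map (fun k => Z.of_nat k - Z.of_nat R + 1)%Z (seq 0 (2 * R - 1)).

Lemma In_A0_list R z : In z (A0_list R) <-> inA0 R z = true.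
Proof.
  unfold A0_list, inA0. rewrite in_map_iff, Z.ltb_lt. split.
  - intros [k [<- Hk]]. apply in_seq in Hk. lia.
  - intros Hz. exists (Z.to_nat (z + Z.of_nat R - 1)). rewrite in_seq. lia.
Qed.

Lemma count_occ_A0_list R z :
  count_occ Z.eq_dec (A0_list R) z = if inA0 R z then 1%nat else 0%nat.
Proof.
  destruct (inA0 R z) eqn:Hz.
  - apply (NoDup_count_occ' Z.eq_dec); [| now apply In_A0_list].
    apply NoDup_map_NoDup_ForallPairs; [intros x y _ _; lia | apply seq_NoDup].
  - apply count_occ_not_In. rewrite In_A0_list. congruence.
Qed.

Lemma is_zsum_inA0 R h :
  is_zsum (fun z => if inA0 R z then h z else 0) (fold_right Rplus 0 (map h (A0_list R))).
Proof.
  eapply is_zsum_ext; [| apply is_zsum_count_occ].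
  intros z. cbn beta. rewrite count_occ_A0_list. destruct (inA0 R z); cbn; ring.
Qed.

Lemma mass_A_A0_list mu0 R : mass_A mu0 R = fold_right Rplus 0 (map mu0 (A0_list R)).
Proof. unfold mass_A, A0_list. now rewrite map_map. Qed.

Definition inA0_ext (R : nat) (x : ZExt) : bool :=
  match x with ZFin z => inA0 R z | _ => false end.

Lemma inv_pow2_le m n : (m <= n)%nat -> / 2 ^ n <= / 2 ^ m.
Proof. intros H. apply Rinv_le_contravar; [apply pow_lt; lra | apply Rle_pow; [lra | exact H]]. Qed.

Lemma Rabs_phi_ZFin z : Rabs (phi (ZFin z)) = 1 - / 2 ^ Z.abs_nat z.
Proof.
  assert (Hpos : 0 < / 2 ^ Z.abs_nat z) by (apply Rinv_0_lt_compat, pow_lt; lra).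
  assert (Hle1 : / 2 ^ Z.abs_nat z <= 1) by (rewrite <- Rinv_1; apply (inv_pow2_le 0); lia).
  unfold phi. destruct (0 <=? z)%Z eqn:Hz.
  - apply Z.leb_le in Hz.
    replace (powerRZ 2 (- z)) with (/ 2 ^ Z.abs_nat z)
      by (rewrite powerRZ_neg', pow_powerRZ, Nat2Z.inj_abs_nat, Z.abs_eq; [reflexivity | lia]).
    apply Rabs_pos_eq. lra.
  - apply Z.leb_gt in Hz.
    replace (powerRZ 2 z) with (/ 2 ^ Z.abs_nat z)
      by (rewrite pow_powerRZ, Nat2Z.inj_abs_nat, Z.abs_neq, <- powerRZ_neg', Z.opp_involutive;
          [reflexivity | lia]).
    rewrite Rabs_left1; lra.
Qed.

Lemma Rabs_phi_inA0 R z : inA0 R z = true -> Rabs (phi (ZFin z)) <= 1 - 2 / 2 ^ R.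
Proof.
  unfold inA0. rewrite Z.ltb_lt. intros Hz. rewrite Rabs_phi_ZFin.
  pose proof (inv_pow2_le (S (Z.abs_nat z)) R ltac:(lia)) as H.
  cbn [pow] in H. rewrite Rinv_mult in H. lra.
Qed.

Lemma Rabs_phi_notA0 R x : inA0_ext R x = false -> 1 - / 2 ^ R <= Rabs (phi x).
Proof.
  assert (Hpos : 0 < / 2 ^ R) by (apply Rinv_0_lt_compat, pow_lt; lra).
  destruct x as [|z|]; cbn [inA0_ext].
  - intros _. cbn [phi]. rewrite Rabs_left; lra.
  - unfold inA0. rewrite Z.ltb_ge. intros Hz. rewrite Rabs_phi_ZFin.
    pose proof (inv_pow2_le R (Z.abs_nat z) ltac:(lia)). lra.
  - intros _. cbn [phi]. rewrite Rabs_R1. lra.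
Qed.

Lemma dZ_inA0_notA0 R x y :
  inA0_ext R x = true -> inA0_ext R y = false -> / 2 ^ R <= dZ x y.
Proof.
  intros Hx Hy. destruct x as [|z|]; try discriminate.
  pose proof (Rabs_phi_inA0 R z Hx). pose proof (Rabs_phi_notA0 R y Hy).
  pose proof (Rabs_triang_inv (phi y) (phi (ZFin z))).
  assert (0 < / 2 ^ R) by (apply Rinv_0_lt_compat, pow_lt; lra).
  unfold dZ. rewrite Rabs_minus_sym. lra.
Qed.

Lemma admissible_of_local R g :
  (forall x, inA0_ext R x = false -> g x = 0) ->
  (forall x, Rabs (g x) <= / 2 ^ R) ->
  (forall x y, inA0_ext R x = true -> inA0_ext R y = true -> Rabs (g x - g y) <= dZ x y) ->
  admissible g.
Proof.
  intros Hsupp Hbd Hlip.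
  assert (Hle1 : / 2 ^ R <= 1) by (rewrite <- Rinv_1; apply (inv_pow2_le 0); lia).
  split; [| intros x; eapply Rle_trans; [apply Hbd | exact Hle1]].
  intros x y. destruct (inA0_ext R x) eqn:Hx, (inA0_ext R y) eqn:Hy.
  - now apply Hlip.
  - rewrite (Hsupp y Hy), Rminus_0_r.
    eapply Rle_trans; [apply Hbd | now apply dZ_inA0_notA0].
  - rewrite (Hsupp x Hx), Rminus_0_l, Rabs_Ropp.
    replace (dZ x y) with (dZ y x) by apply Rabs_minus_sym.
    eapply Rle_trans; [apply Hbd | now apply dZ_inA0_notA0].
  - rewrite (Hsupp x Hx), (Hsupp y Hy), Rminus_0_r, Rabs_R0. apply Rabs_pos.
Qed.

Lemma integ_lt_of_in_ball nu mu d g :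
  in_ball nu mu d -> admissible g -> integ g (msub nu mu) < d.
Proof.
  intros Hball Hg. destruct (Lub_Rbar_correct
    (fun r => exists f, admissible f /\ r = integ f (msub nu mu))) as [Hub _].
  exact (Rbar_le_lt_trans _ _ _ (Hub _ (ex_intro _ g (conj Hg eq_refl))) Hball).
Qed.

Lemma mnorm_lt_of_bound nu C D :
  (forall f, admissible f -> integ f nu <= C) -> C < D -> Rbar_lt (mnorm nu) (Finite D).
Proof.
  intros Hbound HCD. apply (Rbar_le_lt_trans _ (Finite C)); [| exact HCD].
  apply Lub_Rbar_correct. intros r [f [Hf ->]]. now apply Hbound.
Qed.

Lemma integ_ZFin f nu :
  nu ZNinf * f ZNinf = 0 -> nu ZPinf * f ZPinf = 0 ->
  integ f nu = zsum (fun z => nu (ZFin z) * f (ZFin z)).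
Proof. intros Hninf Hpinf. unfold integ, zsum. rewrite Hninf, Hpinf. ring. Qed.

Lemma in_ball_localized R nu mu eps h :
  in_ball nu mu (eps / 2 ^ R) ->
  (forall z, inA0 R z = false -> h z = 0) ->
  (forall z, Rabs (h z) <= 2) ->
  (forall z z', inA0 R z = true -> inA0 R z' = true ->
     Rabs (h z - h z') <= dZ (ZFin z) (ZFin z')) ->
  zsum (fun z => (nu (ZFin z) - mu (ZFin z)) * h z) < 2 * eps.
Proof.
  intros Hball Hsupp Hbd Hlip.
  set (c := / 2 ^ S R).
  assert (Hc : 0 < c) by (apply Rinv_0_lt_compat, pow_lt; lra).
  assert (Hc2 : 2 * c = / 2 ^ R)
    by (unfold c; cbn [pow]; rewrite Rinv_mult; field; apply pow_nonzero; lra).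
  assert (Hc1 : c <= 1) by (rewrite <- Rinv_1; apply (inv_pow2_le 0); lia).
  set (g := fun x => match x with ZFin z => c * h z | _ => 0 end).
  assert (Hg : admissible g).
  { apply (admissible_of_local R).
    - intros [|z|] Hz; cbn; [reflexivity | rewrite (Hsupp z Hz); ring | reflexivity].
    - intros [|z|]; cbn; rewrite ?Rabs_R0; [lra | | lra].
      rewrite Rabs_mult, Rabs_pos_eq by lra. pose proof (Hbd z). nra.
    - intros [|z|] [|z'|] Hz Hz'; try discriminate. cbn.
      rewrite <- Rmult_minus_distr_l, Rabs_mult, Rabs_pos_eq by lra.
      pose proof (Hlip z z' Hz Hz'). pose proof (Rabs_pos (h z - h z')). nra. }
  pose proof (integ_lt_of_in_ball _ _ _ _ Hball Hg) as Hlt.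
  rewrite integ_ZFin in Hlt by (cbn; ring).
  replace (zsum _) with (c * zsum (fun z => (nu (ZFin z) - mu (ZFin z)) * h z)) in Hlt
    by (unfold zsum, msub; rewrite <- Series_scal_l; apply Series_ext; intros k; cbn; ring).
  unfold Rdiv in Hlt. rewrite <- Hc2 in Hlt. nra.
Qed.

Lemma is_zsum_prob mu0 : is_prob_Z mu0 -> is_zsum mu0 1.
Proof. intros [_ [Hex Hs]]. rewrite <- Hs. now apply Series_correct. Qed.

Lemma mass_A_le mu0 m n :
  (forall z, 0 <= mu0 z) -> (m <= n)%nat -> mass_A mu0 m <= mass_A mu0 n.
Proof.
  intros Hpos Hmn. rewrite !mass_A_A0_list.
  refine (is_zsum_le _ _ _ _ _ (is_zsum_inA0 m mu0) (is_zsum_inA0 n mu0)).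
  intros z. unfold inA0.
  destruct (Z.abs z <? Z.of_nat m)%Z eqn:Hm, (Z.abs z <? Z.of_nat n)%Z eqn:Hn;
    rewrite ?Z.ltb_lt, ?Z.ltb_ge in *; try lia; auto with real.
Qed.

Lemma sum_n_le_is_series (a : nat -> R) (l : R) N :
  (forall k, 0 <= a k) -> is_series a l -> sum_n a N <= l.
Proof.
  intros Hpos Hl.
  apply (is_lim_seq_le_loc (fun _ => sum_n a N) (sum_n a) (sum_n a N) l);
    [| apply is_lim_seq_const | exact Hl].
  exists N. intros n Hn. induction Hn as [|n Hn IH]; [lra|].
  rewrite sum_Sn. pose proof (Hpos (S n)). cbn -[sum_n]. lra.
Qed.

Lemma mass_A_large mu0 eps : is_prob_Z mu0 -> 0 < eps -> exists r, mass_A mu0 r > 1 - eps.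
Proof.
  intros Hprob Heps.
  destruct (is_zsum_prob mu0 Hprob (ball 1 (mkposreal eps Heps)) (locally_ball _ _)) as [N HN].
  specialize (HN N (le_n N)). apply Rabs_lt_between' in HN.
  exists (N + 2)%nat. rewrite mass_A_A0_list.
  eapply Rlt_le_trans; [apply HN |].
  set (hA := fun z => if inA0 (N + 2) z then mu0 z else 0).
  rewrite (sum_n_ext_loc _ (fun k => hA (Z.of_nat k) + hA (- Z.of_nat k - 1)%Z)).
  - apply sum_n_le_is_series; [| apply is_zsum_inA0].
    intros k. unfold hA.
    pose proof (proj1 Hprob (Z.of_nat k)). pose proof (proj1 Hprob (- Z.of_nat k - 1)%Z).
    destruct (inA0 _ (Z.of_nat k)), (inA0 _ (- Z.of_nat k - 1)); lra.
  - intros k Hk. unfold hA, inA0.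
    rewrite (proj2 (Z.ltb_lt _ _)), (proj2 (Z.ltb_lt _ _)) by lia. reflexivity.
Qed.

Lemma mass_A_gt mu0 eps r :
  is_prob_Z mu0 -> 0 < eps -> (R_mu0 mu0 eps <= r)%nat -> mass_A mu0 r > 1 - eps.
Proof.
  intros Hprob Heps Hr.
  assert (Hmin : is_R_mu0 mu0 eps (R_mu0 mu0 eps)).
  { unfold R_mu0. apply epsilon_spec.
    destruct (dec_inh_nat_subset_has_unique_least_element (fun r => mass_A mu0 r > 1 - eps))
      as [r0 [[Hr0 Hleast] _]].
    - intros n. apply classic.
    - now apply mass_A_large.
    - now exists r0. }
  pose proof (mass_A_le mu0 _ _ (proj1 Hprob) Hr). destruct Hmin. lra.
Qed.

Lemma ell_inA0 Rr w z :
  inA0 Rr z = true -> ell w (ZFin z) = INR (count_Z (filter (inA0 Rr) w) z) / INR (length w).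
Proof. intros Hz. unfold ell, count_Z. now rewrite count_occ_filter, Hz. Qed.

Lemma ell0_ZFin Rr w z :
  ell0 Rr w (ZFin z) = INR (count_Z (filter (inA0 Rr) w) z) / INR (Nzero_count Rr w).
Proof.
  unfold ell0, count_Z. rewrite count_occ_filter.
  destruct (inA0 Rr z); [reflexivity | cbn; unfold Rdiv; ring].
Qed.

Lemma ell0_nonneg Rr w z : Nzero_count Rr w <> 0%nat -> 0 <= ell0 Rr w (ZFin z).
Proof.
  intros HN. rewrite ell0_ZFin. unfold Rdiv.
  apply Rmult_le_pos; [apply pos_INR | apply Rlt_le, Rinv_0_lt_compat, lt_0_INR; lia].
Qed.

Lemma is_zsum_ell0 Rr w : Nzero_count Rr w <> 0%nat -> is_zsum (fun z => ell0 Rr w (ZFin z)) 1.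
Proof.
  intros HN.
  pose proof (is_zsum_count_occ (filter (inA0 Rr) w) (fun _ => / INR (Nzero_count Rr w))) as H.
  rewrite fold_right_Rplus_map_const, Rinv_r in H by (apply not_0_INR; exact HN).
  eapply is_zsum_ext; [| exact H]. intros z. now rewrite ell0_ZFin.
Qed.

Section LocalizedTests.

Variables (am a0 ap : R) (mu0 : Z -> R) (eps : R) (Rr : nat) (w : list Z).
Hypothesis a0_pos : 0 < a0.
Hypothesis mu0_prob : is_prob_Z mu0.
Hypothesis ell_in_ball : in_ball (ell w) (mix am a0 ap mu0) (eps / 2 ^ Rr).

Lemma mass_A_lt_of_Nzero_count_eq0 : Nzero_count Rr w = 0%nat -> a0 * mass_A mu0 Rr < eps.
Proof.
  intros HN.
  assert (Hdev : is_zsum (fun z => (ell w (ZFin z) - mix am a0 ap mu0 (ZFin z)) *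
                                   (if inA0 Rr z then -2 else 0)) (2 * a0 * mass_A mu0 Rr)).
  { rewrite mass_A_A0_list.
    eapply is_zsum_ext; [| exact (is_zsum_scal (2 * a0) _ _ (is_zsum_inA0 Rr mu0))].
    intros z. cbn beta. destruct (inA0 Rr z) eqn:Hz; [| ring].
    unfold Nzero_count in HN. apply length_zero_iff_nil in HN.
    rewrite (ell_inA0 Rr w z Hz), HN. cbn. unfold Rdiv. ring. }
  enough (2 * a0 * mass_A mu0 Rr < 2 * eps) by lra.
  rewrite <- (zsum_unique _ _ Hdev).
  apply (in_ball_localized Rr _ _ eps _ ell_in_ball).
  - intros z Hz. now rewrite Hz.
  - intros z. destruct (inA0 Rr z); [rewrite Rabs_left |rewrite Rabs_R0]; lra.
  - intros z z' Hz Hz'. rewrite Hz, Hz', Rminus_diag, Rabs_R0. apply Rabs_pos.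
Qed.

Section TestFunction.

Variables (f : ZExt -> R) (u : R).
Hypothesis f_admissible : admissible f.
Hypothesis Nzero_count_neq0 : Nzero_count Rr w <> 0%nat.
Hypothesis u_mean : is_zsum (fun z => ell0 Rr w (ZFin z) * f (ZFin z)) u.

Lemma mean_bound : -1 <= u <= 1.
Proof.
  pose proof (is_zsum_ell0 Rr w Nzero_count_neq0) as H1.
  assert (Hf : forall z, -1 <= f (ZFin z) <= 1)
    by (intros z; apply Rabs_le_between, f_admissible).
  assert (H0 := fun z => ell0_nonneg Rr w z Nzero_count_neq0).
  split.
  - replace (-1) with (-1 * 1) by ring.
    refine (is_zsum_le _ _ _ _ _ (is_zsum_scal (-1) _ _ H1) u_mean).
    intros z. pose proof (Hf z). pose proof (H0 z). nra.
  - refine (is_zsum_le _ _ _ _ _ u_mean H1).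
    intros z. pose proof (Hf z). pose proof (H0 z). nra.
Qed.

Lemma deviation_on_A0_lt S :
  is_zsum (fun z => if inA0 Rr z then mu0 z * (u - f (ZFin z)) else 0) S -> a0 * S < 2 * eps.
Proof.
  intros HS.
  set (N0 := INR (Nzero_count Rr w)). set (L := INR (length w)).
  assert (HN0 : N0 <> 0) by (apply not_0_INR; exact Nzero_count_neq0).
  assert (HL : L <> 0).
  { apply not_0_INR. pose proof (filter_length_le (inA0 Rr) w). unfold Nzero_count in *. lia. }
  set (h := fun z => if inA0 Rr z then f (ZFin z) - u else 0).
  assert (Hdev : is_zsum (fun z => (ell w (ZFin z) - mix am a0 ap mu0 (ZFin z)) * h z) (a0 * S)).
  { (* The l(w) part is N^0(w)/n times int (f - u) dl^0(w) = u - u. *)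
    replace (a0 * S) with (N0 / L * (u - u * 1) + a0 * S) by ring.
    pose proof (is_zsum_ell0 Rr w Nzero_count_neq0) as Hell0.
    eapply is_zsum_ext; [| exact (is_zsum_plus _ _ _ _
      (is_zsum_scal (N0 / L) _ _ (is_zsum_minus _ _ _ _ u_mean (is_zsum_scal u _ _ Hell0)))
      (is_zsum_scal a0 _ _ HS))].
    intros z. unfold h. cbn [mix]. destruct (inA0 Rr z) eqn:Hz.
    - rewrite (ell_inA0 _ _ _ Hz), ell0_ZFin. fold N0 L. field. auto.
    - unfold ell0. rewrite Hz. ring. }
  rewrite <- (zsum_unique _ _ Hdev).
  apply (in_ball_localized Rr _ _ eps _ ell_in_ball).
  - intros z Hz. unfold h. now rewrite Hz.
  - intros z. unfold h. pose proof mean_bound. destruct (inA0 Rr z).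
    + pose proof (proj2 f_admissible (ZFin z)) as Hfz. apply Rabs_le_between in Hfz.
      apply Rabs_le_between. lra.
    + rewrite Rabs_R0. lra.
  - intros z z' Hz Hz'. unfold h. rewrite Hz, Hz'.
    replace (f (ZFin z) - u - (f (ZFin z') - u)) with (f (ZFin z) - f (ZFin z')) by ring.
    apply f_admissible.
Qed.

Lemma integ_ell0_le S :
  is_zsum (fun z => if inA0 Rr z then mu0 z * (u - f (ZFin z)) else 0) S ->
  integ f (msub (ell0 Rr w) (extZ mu0)) <= S + 2 * (1 - mass_A mu0 Rr).
Proof.
  intros HS.
  destruct mu0_prob as [mu0_nonneg _].
  assert (Hf : forall z, -1 <= f (ZFin z) <= 1)
    by (intros z; apply Rabs_le_between, f_admissible).
  pose proof mean_bound.
  assert (HT : is_zsum (fun z => mu0 z * f (ZFin z)) (zsum (fun z => mu0 z * f (ZFin z)))).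
  { apply (is_zsum_dominated _ mu0 1); [| now apply is_zsum_prob].
    intros z. rewrite Rabs_mult, Rabs_pos_eq by apply mu0_nonneg.
    pose proof (mu0_nonneg z). pose proof (proj2 f_admissible (ZFin z)). nra. }
  rewrite integ_ZFin by (unfold msub; cbn; ring).
  rewrite (zsum_unique _ (u - zsum (fun z => mu0 z * f (ZFin z)))).
  2:{ eapply is_zsum_ext; [| exact (is_zsum_minus _ _ _ _ u_mean HT)].
      intros z. unfold msub. cbn. ring. }
  replace (u - zsum _) with (u * 1 - zsum (fun z => mu0 z * f (ZFin z))) by ring.
  rewrite mass_A_A0_list.
  refine (is_zsum_le _ _ _ _ _
            (is_zsum_minus _ _ _ _ (is_zsum_scal u _ _ (is_zsum_prob _ mu0_prob)) HT)
            (is_zsum_plus _ _ _ _ HS (is_zsum_scal 2 _ _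
               (is_zsum_minus _ _ _ _ (is_zsum_prob _ mu0_prob) (is_zsum_inA0 Rr mu0))))).
  intros z. pose proof (mu0_nonneg z). pose proof (Hf z).
  destruct (inA0 Rr z); nra.
Qed.

End TestFunction.

Lemma integ_ell0_lt f :
  Nzero_count Rr w <> 0%nat -> admissible f ->
  integ f (msub (ell0 Rr w) (extZ mu0)) < 2 * eps / a0 + 2 * (1 - mass_A mu0 Rr).
Proof.
  intros HN Hf.
  set (u := zsum (fun z => ell0 Rr w (ZFin z) * f (ZFin z))).
  assert (Hu : is_zsum (fun z => ell0 Rr w (ZFin z) * f (ZFin z)) u).
  { apply (is_zsum_dominated _ (fun z => ell0 Rr w (ZFin z)) 1); [| now apply is_zsum_ell0].
    intros z. pose proof (ell0_nonneg Rr w z HN). pose proof (proj2 Hf (ZFin z)).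
    rewrite Rabs_mult, (Rabs_pos_eq (ell0 _ _ _)) by lra. nra. }
  pose proof (is_zsum_inA0 Rr (fun z => mu0 z * (u - f (ZFin z)))) as HS.
  pose proof (deviation_on_A0_lt f u Hf HN Hu _ HS) as Hdev.
  pose proof (integ_ell0_le f u Hf HN Hu _ HS) as Hle.
  enough (fold_right Rplus 0 (map (fun z => mu0 z * (u - f (ZFin z))) (A0_list Rr)) < 2 * eps / a0)
    by lra.
  apply (Rmult_lt_reg_l a0); [exact a0_pos|].
  replace (a0 * (2 * eps / a0)) with (2 * eps) by (field; lra). exact Hdev.
Qed.

End LocalizedTests.

Theorem lemma2p5 (am a0 ap : R) (mu0 : Z -> R) (eps : R) (Rr n : nat) (w : list Z) :
  0 <= am -> 0 <= a0 -> 0 <= ap -> am + a0 + ap = 1 -> a0 <> 0 ->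
  is_prob_Z mu0 ->
  0 < eps -> eps < a0 / 2 ->
  (R_Zbar eps < Z.of_nat Rr)%Z -> (R_mu0 mu0 eps < Rr)%nat ->
  in_Omega0 n w ->
  in_ball (ell w) (mix am a0 ap mu0) (eps / 2 ^ Rr) ->
  Nzero_count Rr w <> 0%nat /\
  Rbar_lt (mnorm (msub (ell0 Rr w) (extZ mu0))) (Finite (6 * eps / a0)).
Proof.
  intros Ham Ha0 Hap Hsum Ha0n Hprob Heps Heps2 _ HRmu _ Hball.
  assert (Ha0pos : 0 < a0) by lra.
  assert (Hmass : mass_A mu0 Rr > 1 - eps) by (apply mass_A_gt; [exact Hprob | exact Heps | lia]).
  assert (HN : Nzero_count Rr w <> 0%nat).
  { intros HN. pose proof (mass_A_lt_of_Nzero_count_eq0 am a0 ap mu0 eps Rr w Hball HN).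
    assert (a0 <= 1) by lra. nra. }
  split; [exact HN |].
  apply (mnorm_lt_of_bound _ (2 * eps / a0 + 2 * (1 - mass_A mu0 Rr))).
  - intros f Hf. left. now apply (integ_ell0_lt am a0 ap).
  - assert (Heps_a0 : eps <= eps / a0).
    { apply (Rmult_le_reg_l a0); [exact Ha0pos|].
      replace (a0 * (eps / a0)) with eps by (field; lra). nra. }
    replace (6 * eps / a0) with (2 * eps / a0 + 4 * (eps / a0)) by (field; lra). lra.
Qed.
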